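(* Let $G$ be a graph of order $n$. Then $\alpha(G) \le m_G[0,\,n-\alpha(G)]$.
   Context: All graphs are finite and simple. The Laplacian matrix of $G$ is $L(G)=D(G)-A(G)$, where $D(G)$ is the diagonal matrix of vertex degrees and $A(G)$ the adjacency matrix; its eigenvalues (with multiplicity) are the Laplacian eigenvalues of $G$. For an interval $I\subseteq\mathbb{R}$, $m_G I$ denotes the number of Laplacian eigenvalues of $G$, counted with multiplicity, lying in $I$. $\alpha(G)$ denotes the independence number of $G$. *)

From HB Require Import structures.
From mathcomp Require Import all_boot all_order all_algebra.
From mathcomp Require Import polyrcf.
Set Implicit Arguments. Unset Strict Implicit. Unset Printing Implicit Defensive.
Import Order.TTheory GRing.Theory Num.Theory.
Local Open Scope ring_scope.

Definition simple_graph (T : finType) (e : rel T) : Prop :=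
  symmetric e /\ irreflexive e.

Definition deg (T : finType) (e : rel T) (x : T) : nat := #|[set y | e x y]|.

Definition laplacian (R : nzRingType) (T : finType) (e : rel T) : 'M[R]_#|T| :=
  \matrix_(i, j) (if i == j then (deg e (enum_val i))%:R
                  else - (e (enum_val i) (enum_val j))%:R).

Definition independent (T : finType) (e : rel T) (S : {set T}) : bool :=
  [forall x in S, forall y in S, ~~ e x y].

Definition alpha (T : finType) (e : rel T) : nat :=
  \max_(S : {set T} | independent e S) #|S|.

(* m_G I : number of Laplacian eigenvalues (roots of the characteristic
   polynomial, counted with multiplicity) lying in the interval I. *)
Definition mG (R : rcfType) (T : finType) (e : rel T) (I : interval R) : nat :=
  let p := char_poly (laplacian R e) in
  (\sum_(x <- rootsR p | x \in I) mup x p)%N.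
Arguments mG R {T} e I.

From HB Require Import structures.
From mathcomp Require Import all_boot all_order all_algebra.
From mathcomp Require Import polyrcf.
From mathcomp Require Import complex spectral sesquilinear ring lra.
Set Implicit Arguments. Unset Strict Implicit. Unset Printing Implicit Defensive.
Import Order.TTheory GRing.Theory Num.Theory.
Local Open Scope ring_scope.

(* The vertices of a maximum independent set S are pairwise non-adjacent and
   have degree at most n - alpha, so the principal submatrix of L on S is
   diagonal with entries at most n - alpha.  By Cauchy interlacing L has at
   least |S| = alpha eigenvalues at most n - alpha, and they all lie in
   [0, n - alpha] because a Laplacian has no negative eigenvalue. *)

Lemma sum_count_mem_uniq (T : eqType) (r s : seq T) (I : pred T) :
  uniq r -> {subset s <= r} ->
  (\sum_(x <- r | I x) count_mem x s)%N = count I s.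
Proof.
move=> ur; elim: s => [|y s IH] sr /=; first by rewrite big1.
rewrite big_split /= IH; last by move=> z zs; apply: sr; rewrite inE zs orbT.
congr (_ + _)%N; rewrite big_mkcond (bigD1_seq y) ?sr ?mem_head //= eqxx.
rewrite big1 ?addn0; first by case: (I y).
by move=> z /negbTE; rewrite eq_sym => ->; case: (I z).
Qed.

Lemma sum_mup_rootsR_prod_XsubC (R : rcfType) n (r : 'I_n -> R) (I : pred R) :
  let p := \prod_(i < n) ('X - (r i)%:P) in
  (\sum_(x <- rootsR p | I x) mup x p)%N = #|[set i | I (r i)]|.
Proof.
rewrite /=; set s := [seq r i | i <- enum 'I_n].
have -> : \prod_(i < n) ('X - (r i)%:P) = \prod_(y <- s) ('X - y%:P).
  by rewrite big_map big_enum.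
set p := \prod_(y <- s) _; have p0 : p != 0 by rewrite monic_neq0 ?monic_prod_XsubC.
have s_roots : {subset s <= rootsR p}.
  move=> y ys; have := roots_onP (roots_on_rootsR p0) (x := y).
  by rewrite /= => <- //; rewrite /p root_prod_XsubC.
under eq_bigr do rewrite mu_prod_XsubC.
rewrite sum_count_mem_uniq //; last exact/lt_sorted_uniq/sorted_roots.
rewrite count_map -sum1_count big_enum_cond /= -sum1_card.
by apply: eq_bigl => i; rewrite inE.
Qed.

Lemma char_poly_similar (F : fieldType) n (P B : 'M[F]_n) :
  P \in unitmx -> char_poly (invmx P *m B *m P) = char_poly B.
Proof.
move=> Pu; rewrite /char_poly /char_poly_mx.
have -> : 'X%:M - map_mx polyC (invmx P *m B *m P) =
  map_mx polyC (invmx P) *m ('X%:M - map_mx polyC B) *m map_mx polyC P.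
  rewrite mulmxBr mulmxBl !map_mxM /= mul_mx_scalar -scalemxAl; congr (_ - _).
  by rewrite -map_mxM mulVmx // map_mx1 scalemx1.
rewrite !det_mulmx !det_map_mx mulrC mulrA -rmorphM /= -det_mulmx mulmxV //.
by rewrite det1 mul1r.
Qed.

Lemma char_poly_diag (R : comNzRingType) n (d : 'rV[R]_n) :
  char_poly (diag_mx d) = \prod_(i < n) ('X - (d 0 i)%:P).
Proof.
rewrite char_poly_trig ?diag_mx_is_trig //.
by apply: eq_bigr => i _; rewrite mxE eqxx mulr1n.
Qed.

Lemma symmetric_spectral (R : rcfType) n (M : 'M[R]_n) : M^T = M ->
  exists r : 'I_n -> R, exists2 P : 'M[R[i]]_n, P \is unitarymx &
    map_mx (real_complex R) M = invmx P *m diag_mx (\row_i real_complex R (r i)) *m P /\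
    char_poly M = \prod_(i < n) ('X - (r i)%:P).
Proof.
move=> Msym; set A := map_mx (real_complex R) M.
have Ahermitian : A \is hermsymmx.
  apply: realsym_hermsym.
    by apply/is_hermitianmxP; rewrite expr0 scale1r map_mx_id // /A map_trmx Msym.
  by apply/mxOverP => i j; rewrite mxE complex_real.
have /orthomx_spectralP AE := hermitian_normalmx Ahermitian.
have /mxOverP dreal := hermitian_spectral_diag_real Ahermitian.
set P := spectralmx A in AE; set d := spectral_diag A in AE dreal.
have dE : d = \row_i real_complex R (complex.Re (d 0 i)).
  by apply/rowP => i; rewrite mxE RRe_real // dreal.
exists (fun i => complex.Re (d 0 i)), P; first exact: spectral_unitarymx.
split; first by rewrite -dE.
apply: (map_poly_inj (real_complex R)).
rewrite map_char_poly -/A AE char_poly_similar ?spectral_unit //.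
rewrite char_poly_diag rmorph_prod /=; apply: eq_bigr => i _.
by rewrite map_polyXsubC /= RRe_real // dreal.
Qed.

Lemma rV_neq0_entry (R : nzRingType) n (v : 'rV[R]_n) :
  v != 0 -> exists k, v 0 k != 0.
Proof.
move=> v0; apply/existsP; apply: contraNT v0; rewrite negb_exists => /forallP v0.
by apply/eqP/rowP => k; rewrite mxE; apply/eqP; have := v0 k; rewrite negbK.
Qed.

Definition selmx (F : fieldType) n (X : {set 'I_n}) : 'M[F]_(#|X|, n) :=
  \matrix_(k, j) (j == enum_val k)%:R.

Lemma selmx_mulT (F : fieldType) n (X : {set 'I_n}) :
  selmx F X *m (selmx F X)^T = 1%:M.
Proof.
apply/matrixP => k l; rewrite !mxE (bigD1 (enum_val k)) //= big1.
  rewrite !mxE eqxx mul1r addr0 (inj_eq enum_val_inj) eq_sym.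
  by case: (l == k).
by move=> j /negbTE jk; rewrite !mxE jk mul0r.
Qed.

Lemma rank_selmx (F : fieldType) n (X : {set 'I_n}) :
  \rank (selmx F X) = #|X|.
Proof.
apply/eqP; rewrite eqn_leq rank_leq_row /=.
by rewrite -{1}(mxrank1 F #|X|) -(selmx_mulT F X) mxrankM_maxl.
Qed.

Lemma mul_selmxT (F : fieldType) n (X : {set 'I_n}) (v : 'rV[F]_n) k :
  (v *m (selmx F X)^T) 0 k = v 0 (enum_val k).
Proof.
rewrite mxE (bigD1 (enum_val k)) //= big1.
  by rewrite !mxE eqxx mulr1 addr0.
by move=> j /negbTE jk; rewrite !mxE jk mulr0.
Qed.

Lemma mul_selmx_notin (F : fieldType) n (X : {set 'I_n}) (w : 'rV[F]_#|X|) j :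
  j \notin X -> (w *m selmx F X) 0 j = 0.
Proof.
move=> jX; rewrite mxE big1 // => k _; rewrite mxE.
by case: eqP => [jk|]; [move: jX; rewrite jk enum_valP | rewrite mulr0].
Qed.

(* Rows supported on X form a space of dimension #|X|, and the conditions
   (x Q)_j = 0 for j in Y cut out at most #|Y| dimensions of it. *)
Lemma exists_supported_row_mul_vanishing (F : fieldType) n
    (X Y : {set 'I_n}) (Q : 'M[F]_n) :
  (#|Y| < #|X|)%N -> exists x : 'rV[F]_n, [/\ x != 0,
     forall j, j \notin X -> x 0 j = 0 &
     forall j, j \in Y -> (x *m Q) 0 j = 0].
Proof.
move=> ltYX; set K := (selmx F X :&: kermx (Q *m (selmx F Y)^T))%MS.
have K0 : K != 0.
  rewrite -mxrank_eq0; apply: contraTneq ltYX => rankK0.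
  have := mxrank_mul_ker (selmx F X) (Q *m (selmx F Y)^T).
  by rewrite rank_selmx -/K rankK0 addn0 => <-; rewrite -leqNgt rank_leq_col.
exists (nz_row K); split; first by rewrite nz_row_eq0.
- move=> j jX; have /submxP [w ->] : (nz_row K <= selmx F X)%MS.
    exact: submx_trans (nz_row_sub K) (capmxSl _ _).
  exact: mul_selmx_notin.
- move=> j jY; have : (nz_row K <= kermx (Q *m (selmx F Y)^T))%MS.
    exact: submx_trans (nz_row_sub K) (capmxSr _ _).
  rewrite sub_kermx mulmxA => /eqP /rowP /(_ (enum_rank_in jY j)).
  by rewrite mul_selmxT enum_rankK_in // [in X in _ = X -> _]mxE.
Qed.

Local Open Scope sesquilinear_scope.

Lemma qformE (C : numClosedFieldType) n (A : 'M[C]_n) (x : 'rV[C]_n) :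
  (x *m A *m x ^t*) 0 0 = \sum_i \sum_j x 0 i * A i j * (x 0 j)^*.
Proof.
rewrite mxE exchange_big /=; apply: eq_bigr => j _.
rewrite [(x *m A) 0 j]mxE big_distrl /=; apply: eq_bigr => i _.
by rewrite !mxE.
Qed.

Lemma dnormE (C : numClosedFieldType) n (x : 'rV[C]_n) :
  (x *m x ^t*) 0 0 = \sum_i x 0 i * (x 0 i)^*.
Proof. by rewrite mxE; apply: eq_bigr => i _; rewrite !mxE. Qed.

Lemma qform_le_diag_block (C : numClosedFieldType) n (A : 'M[C]_n)
    (X : {set 'I_n}) (c : C) (x : 'rV[C]_n) :
  {in X &, forall i j, i != j -> A i j = 0} -> {in X, forall i, A i i <= c} ->
  (forall j, j \notin X -> x 0 j = 0) ->
  (x *m A *m x ^t*) 0 0 <= c * (x *m x ^t*) 0 0.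
Proof.
move=> Aoff Adiag xX; rewrite qformE dnormE mulr_sumr; apply: ler_sum => i _.
have [iX|iX] := boolP (i \in X); last by rewrite big1 => [|j _]; rewrite xX ?mul0r ?mulr0.
rewrite (bigD1 i) //= big1 ?addr0 => [|j ji]; last first.
  have [jX|jX] := boolP (j \in X); last by rewrite (xX j) // rmorph0 mulr0.
  by rewrite Aoff // 1?eq_sym // mulr0 mul0r.
rewrite mulrAC [c * _]mulrC.
by rewrite ler_wpM2l ?mul_conjC_ge0 ?Adiag.
Qed.

Lemma qform_diag_gt (C : numClosedFieldType) n (d : 'rV[C]_n) (c : C)
    (y : 'rV[C]_n) :
  (forall j, y 0 j != 0 -> c < d 0 j) -> y != 0 ->
  c * (y *m y ^t*) 0 0 < (y *m diag_mx d *m y ^t*) 0 0.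
Proof.
move=> yd y0; rewrite -subr_gt0 qformE dnormE mulr_sumr -sumrB.
have [k yk] := rV_neq0_entry y0.
have termE i : \sum_j y 0 i * diag_mx d i j * (y 0 j)^* - c * (y 0 i * (y 0 i)^*)
   = (d 0 i - c) * (y 0 i * (y 0 i)^*).
  rewrite (bigD1 i) //= big1 ?addr0 => [|j ji]; last first.
    by rewrite mxE eq_sym (negbTE ji) mulr0n mulr0 mul0r.
  by rewrite mxE eqxx mulr1n mulrBl mulrAC mulrC mulrA.
under eq_bigr do rewrite termE.
rewrite (bigD1 k) //= ltr_wpDr ?sumr_ge0 // => [i _|].
  have [->|yi] := eqVneq (y 0 i) 0; first by rewrite mul0r mulr0.
  by rewrite mulr_ge0 ?mul_conjC_ge0 // subr_ge0 ltW // yd.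
by rewrite mulr_gt0 ?mul_conjC_gt0 // subr_gt0 yd.
Qed.

(* A Cauchy-interlacing bound: the eigenvalues of M are compared with those of
   its principal submatrix on X through the Rayleigh quotient of a vector
   supported on X that is orthogonal to the eigenvectors with eigenvalue <= c. *)
Lemma card_le_count_eigen_le (R : rcfType) n (M : 'M[R]_n) (X : {set 'I_n})
    (c : R) :
  M^T = M ->
  {in X &, forall i j, i != j -> M i j = 0} -> {in X, forall i, M i i <= c} ->
  (#|X| <= \sum_(x <- rootsR (char_poly M) | (x <= c)%R) mup x (char_poly M))%N.
Proof.
move=> Msym Moff Mdiag; have [r [P Pu [ME ->]]] := symmetric_spectral Msym.
rewrite sum_mup_rootsR_prod_XsubC leqNgt; apply/negP => ltYX.
have [x [x0 xX xK]] := exists_supported_row_mul_vanishing (P ^t*) ltYX.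
set y := x *m P ^t*; set d := \row_i real_complex R (r i).
set A := map_mx (real_complex R) M.
have PtP : P ^t* *m P = 1%:M by rewrite -invmx_unitary // mulVmx ?unitarymx_unit.
have yt : y ^t* = P *m x ^t* by rewrite /y trmx_mul map_mxM trmxCK.
have y0 : y != 0.
  apply: contraNneq x0 => y0; rewrite -[x]mulmx1 -PtP mulmxA.
  by rewrite -/y y0 mul0mx.
have qformA : (x *m A *m x ^t*) 0 0 = (y *m diag_mx d *m y ^t*) 0 0.
  by rewrite /A ME invmx_unitary // yt /y !mulmxA.
have dnormA : (x *m x ^t*) 0 0 = (y *m y ^t*) 0 0.
  by rewrite yt /y !mulmxA -(mulmxA x) PtP mulmx1.
have gt_c : real_complex R c * (x *m x ^t*) 0 0 < (x *m A *m x ^t*) 0 0.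
  rewrite qformA dnormA; apply: qform_diag_gt y0 => j yj.
  rewrite mxE ltcR ltNge; apply: contra yj => rc.
  by apply/eqP; apply: xK; rewrite inE.
have le_c : (x *m A *m x ^t*) 0 0 <= real_complex R c * (x *m x ^t*) 0 0.
  apply: qform_le_diag_block xX => [i j iX jX ij|i iX].
    by rewrite mxE Moff // rmorph0.
  by rewrite mxE lecR Mdiag.
by have := lt_le_trans gt_c le_c; rewrite ltxx.
Qed.

Section Laplacian.

Variables (T : finType) (e : rel T).
Hypothesis e_sym : symmetric e.

Lemma laplacian_sym (R : nzRingType) : (laplacian R e)^T = laplacian R e.
Proof.
apply/matrixP => i j; rewrite !mxE eq_sym e_sym.
by case: eqP => // ->.
Qed.

Lemma deg_sum (R : nzRingType) (v : T) :
  (deg e v)%:R = \sum_(j < #|T|) (e (enum_val j) v)%:R :> R.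
Proof.
rewrite /deg -sum1_card natr_sum big_mkcond /= (big_enum_val (A := T)).
by apply: eq_bigr => j _; rewrite inE e_sym; case: (e _ _).
Qed.

Hypothesis e_irr : irreflexive e.

(* Look at a coordinate of largest modulus of an eigenvector: there the
   eigenvalue equation bounds |deg - x| by deg. *)
Lemma laplacian_eigen_ge0 (R : rcfType) (x : R) :
  root (char_poly (laplacian R e)) x -> 0 <= x.
Proof.
rewrite -eigenvalue_root_char => /eigenvalueP [v vL v0].
have [k vk] := rV_neq0_entry v0.
have [i _ imax] := @arg_maxP _ R _ k xpredT (fun i => `|v 0 i|) isT.
have vi_gt0 : 0 < `|v 0 i| by apply: lt_le_trans (imax k isT); rewrite normr_gt0.
set s := \sum_(j | j != i) v 0 j * (e (enum_val j) (enum_val i))%:R.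
set dg := (deg e (enum_val i))%:R : R.
have sE : s = v 0 i * (dg - x).
  move/rowP: vL => /(_ i); rewrite !mxE (bigD1 i) //= mxE eqxx.
  rewrite (eq_bigr (fun j => - (v 0 j * (e (enum_val j) (enum_val i))%:R))).
    by rewrite sumrN -/s -/dg => vLi; rewrite mulrBr [v 0 i * x]mulrC -vLi; ring.
  by move=> j ji; rewrite mxE (negbTE ji) mulrN.
have dgE : dg = \sum_(j | j != i) (e (enum_val j) (enum_val i))%:R.
  by rewrite /dg deg_sum (bigD1 i) //= e_irr add0r.
have s_le : `|s| <= `|v 0 i| * dg.
  apply: le_trans (ler_norm_sum _ _ _) _; rewrite dgE mulr_sumr.
  apply: ler_sum => j _; rewrite normrM normr_nat.
  by apply: ler_wpM2r; [exact: ler0n | exact: imax].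
move: s_le; rewrite sE normrM ler_pM2l // => dgx_le.
have := le_trans (ler_norm _) dgx_le; have : 0 <= dg by exact: ler0n.
lra.
Qed.

End Laplacian.

Lemma alpha_attained (T : finType) (e : rel T) :
  exists2 S : {set T}, independent e S & alpha e = #|S|.
Proof.
have [|S S_indep alphaE] := @eq_bigmax_cond _ (independent e) (fun S => #|S|).
  by apply/card_gt0P; exists set0; apply/forall_inP => x; rewrite inE.
by exists S; rewrite // /alpha alphaE.
Qed.

Lemma independentP (T : finType) (e : rel T) (S : {set T}) :
  independent e S -> {in S &, forall u v, e u v = false}.
Proof.
move=> /forall_inP S_indep u v uS vS.
exact/negbTE/(forall_inP (S_indep u uS)).
Qed.

Lemma deg_independent_le (T : finType) (e : rel T) (S : {set T}) (v : T) :
  independent e S -> v \in S -> (deg e v <= #|T| - #|S|)%N.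
Proof.
move=> S_indep vS; rewrite -(cardsC S) addKn.
apply: subset_leq_card; apply/subsetP => u; rewrite !inE.
by apply: contraTN => uS; rewrite (independentP S_indep).
Qed.

Theorem mainTheorem1 (R : rcfType) (T : finType) (e : rel T) :
  simple_graph e ->
  (alpha e <= mG R e `[0%R : R, ((#|T| - alpha e)%N)%:R%R])%N.
Proof.
move=> [e_sym e_irr]; have [S S_indep ->] := alpha_attained e.
set c : R := (#|T| - #|S|)%:R; set p := char_poly (laplacian R e).
have -> : mG R e `[0, c] = (\sum_(x <- rootsR p | (x <= c)%R) mup x p)%N.
  rewrite /mG -/p [LHS]big_seq_cond [RHS]big_seq_cond; apply: eq_bigl => x.
  rewrite in_itv /=; case: (boolP (x \in rootsR p)) => //= /root_roots.
  by move=> /(laplacian_eigen_ge0 e_sym e_irr) ->.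
rewrite -(card_imset S (@enum_rank_inj T)).
apply: card_le_count_eigen_le; first exact: laplacian_sym.
  move=> _ _ /imsetP [u uS ->] /imsetP [v vS ->] uv.
  by rewrite mxE (negbTE uv) !enum_rankK (independentP S_indep) // oppr0.
move=> _ /imsetP [v vS ->]; rewrite mxE eqxx enum_rankK ler_nat.
exact: deg_independent_le.
Qed.
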